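(* Let $k$ be a field of characteristic zero, $n\ge1$, $S=k[x_1,\ldots,x_n]$, and $(S,L)$ a Lie–Rinehart algebra with $L$ a free $S$-module with basis $\alpha_1,\ldots,\alpha_n$ and enveloping algebra $U$. Let $p\ge1$ and $a=\sum_{|I|=p}f^I\alpha^I$ with $f^I\in S$ for $I\in\mathbb{N}^n$, $|I|=p$. If $k'\in\{1,\ldots,n\}$ and $J=(j_n,\ldots,j_1)\in\mathbb{N}^n$ has order $p-1$, then the coefficient of $\alpha^J$ in $[a,x_{k'}]$ (with respect to the left $S$-basis $\{\alpha^I\}$ of $U$) is $$\sum_{m=1}^n(j_m+1)\,\alpha_m(x_{k'})\,f^{J+e_m}.$$
   Context: $\alpha_m(x_{k'})$ denotes the action of $\alpha_m$ (through the anchor $L\to\operatorname{Der}(S)$) on $x_{k'}$; in $U$, $[\alpha,s]=\alpha(s)$. For $I=(i_n,\ldots,i_1)\in\mathbb{N}^n$, $\alpha^I=\alpha_n^{i_n}\cdots\alpha_1^{i_1}$ and $|I|=i_n+\cdots+i_1$ (its order); the $\alpha^I$ form a basis of $U$ as a left $S$-module. $e_m\in\mathbb{N}^n$ is the tuple with $1$ in the entry indexed by $m$ (the exponent of $\alpha_m$) and $0$ elsewhere. *)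

From HB Require Import structures.
From mathcomp Require Import all_boot all_algebra.
From mathcomp Require Import mpoly.
Set Implicit Arguments. Unset Strict Implicit. Unset Printing Implicit Defensive.
Import GRing.Theory.
Local Open Scope ring_scope.

(* Multi-indices I in N^n; index m : 'I_n (0-based) is the exponent of alpha_(m+1). *)
Notation multi n := {ffun 'I_n -> nat}.

Definition mono (U : nzRingType) (n : nat) (al : 'I_n -> U) (I : multi n) : U :=
  \prod_(m <- rev (enum 'I_n)) al m ^+ I m.

Definition ordI (n : nat) (I : multi n) : nat := (\sum_(m < n) I m)%N.

Definition addunit (n : nat) (J : multi n) (m : 'I_n) : multi n :=
  [ffun i => (J i + (i == m))%N].

Definition multi_of (n p : nat) (I : {ffun 'I_n -> 'I_p}) : multi n :=
  [ffun m => nat_of_ord (I m)].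

Definition is_kderivation (k : fieldType) (n : nat)
  (D : {mpoly k[n]} -> {mpoly k[n]}) : Prop :=
  [/\ (forall f g, D (f + g) = D f + D g),
      (forall (c : k) f, D (c *: f) = c *: D f) &
      (forall f g, D (f * g) = f * D g + D f * g)].

(* Write alpha^I as the ordered word w = alpha_n^(i_n) ... alpha_1^(i_1) and move
   s = x_k' through it one letter at a time with [alpha_m, s] = alpha_m(s).  Up to
   S-multiples of words obtained from w by deleting at least two letters, the
   commutator [w, s] is the sum, over the letters of w, of alpha_m(s) times w with
   that letter deleted.  Subwords of an ordered word are ordered, hence are basis
   monomials, so no bracket relation [alpha_i, alpha_j] is ever needed; those with
   two letters deleted have order <= |I| - 2 and do not contribute to alpha^J.
   Deleting one of the i_m copies of alpha_m yields alpha^J exactly when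
   I = J + e_m, which gives the factor j_m + 1. *)

From HB Require Import structures.
From mathcomp Require Import all_boot all_algebra.
From mathcomp Require Import mpoly.
Set Implicit Arguments. Unset Strict Implicit. Unset Printing Implicit Defensive.
Import GRing.Theory.
Local Open Scope ring_scope.

Section Commutators.
Variables (T : eqType) (R U : nzRingType) (iota : {rmorphism R -> U}).
Variables (al : T -> U) (rho : T -> R -> R).
Hypothesis anchor : forall m s, al m * iota s - iota s * al m = iota (rho m s).

Definition word (w : seq T) : U := \prod_(m <- w) al m.

Fixpoint deletions (w : seq T) : seq (T * seq T) :=
  if w is m :: w' then (m, w') :: [seq (x.1, m :: x.2) | x <- deletions w'] else [::].

Lemma unzip1_deletions w : unzip1 (deletions w) = w.
Proof. by elim: w => //= m w IHw; rewrite /unzip1 -map_comp in IHw *; rewrite IHw. Qed.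

Lemma in_deletions w x : x \in deletions w -> subseq x.2 w /\ perm_eq w (x.1 :: x.2).
Proof.
elim: w x => [|m w IHw] x //=; rewrite inE => /predU1P[-> | /mapP[y /IHw[sub perm] ->]].
  by split; [exact: subseq_cons | exact: perm_refl].
rewrite /= eqxx sub; split=> //.
by rewrite perm_sym -[y.1 :: _]/([:: y.1] ++ [:: m] ++ y.2) perm_catCA /= perm_cons perm_sym.
Qed.

Inductive word_span (A : pred (seq T)) : U -> Prop :=
  | word_span0 : word_span A 0
  | word_spanDl g v u : A v -> word_span A u -> word_span A (iota g * word v + u).

Lemma word_spanD (A : pred (seq T)) u1 u2 :
  word_span A u1 -> word_span A u2 -> word_span A (u1 + u2).
Proof.
by elim=> [|g v u Av _ IHu] span2; rewrite ?add0r // -addrA; apply: word_spanDl (IHu _).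
Qed.

Lemma word_span_term (A : pred (seq T)) g v : A v -> word_span A (iota g * word v).
Proof. by move=> Av; rewrite -[_ * _]addr0; apply: word_spanDl (word_span0 A). Qed.

Lemma word_span_sum (A : pred (seq T)) (I : Type) (r : seq I) (P : pred I) (F : I -> U) :
  (forall i, P i -> word_span A (F i)) -> word_span A (\sum_(i <- r | P i) F i).
Proof. exact: (big_ind _ (word_span0 A) (@word_spanD A)). Qed.

Lemma mul_al_term m g v :
  al m * (iota g * word v) = iota g * word (m :: v) + iota (rho m g) * word v.
Proof.
have : al m * iota g = iota g * al m + iota (rho m g) by rewrite -anchor addrC subrK.
by rewrite mulrA => ->; rewrite mulrDl /word big_cons mulrA.
Qed.

Lemma word_span_mull (A B : pred (seq T)) m u : (forall v, A v -> B v && B (m :: v)) ->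
  word_span A u -> word_span B (al m * u).
Proof.
move=> AB; elim=> [|g v u' /AB/andP[Bv Bmv] _ IHu]; first by rewrite mulr0; apply: word_span0.
rewrite mulrDr mul_al_term -addrA; apply: word_spanDl Bmv _.
exact: word_spanDl Bv IHu.
Qed.

Definition lower_subwords (w : seq T) : pred (seq T) :=
  [pred v | subseq v w & (size v).+2 <= size w]%N.

Lemma commutator_word w s : exists2 r, word_span (lower_subwords w) r &
  word w * iota s - iota s * word w
  = \sum_(x <- deletions w) iota (rho x.1 s) * word x.2 + r.
Proof.
elim: w => [|m w [r r_low IHw]].
  by exists 0; [apply: word_span0 | rewrite /word !big_nil mul1r mulr1 subrr addr0].
exists (\sum_(x <- deletions w) iota (rho m (rho x.1 s)) * word x.2 + al m * r).
- apply: word_spanD.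
  + rewrite big_seq_cond; apply: word_span_sum => x /andP[/in_deletions[sub perm] _].
    apply: word_span_term; apply/andP; split; first exact: subseq_trans sub (subseq_cons w m).
    by rewrite /= (perm_size perm).
  + apply: word_span_mull r_low => v /andP[sub le]; apply/andP; split; apply/andP; split.
    * exact: subseq_trans sub (subseq_cons w m).
    * exact: leqW le.
    * by rewrite (subseq_cat2l [:: m]).
    * exact: le.
- have -> : word (m :: w) * iota s - iota s * word (m :: w)
      = al m * (word w * iota s - iota s * word w) + (al m * iota s - iota s * al m) * word w.
    by rewrite /word big_cons mulrBr mulrBl !mulrA addrA subrK.
  rewrite IHw anchor mulrDr mulr_sumr /= big_cons big_map /=.
  under eq_bigr do rewrite mul_al_term.
  rewrite big_split /= -!addrA; set D := iota (rho m s) * word w.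
  by rewrite [D + _]addrC -!addrA.
Qed.

End Commutators.

Section OrderedWords.
Variable n : nat.

Definition geq_ord : rel 'I_n := fun i j => (j <= i)%N.

Lemma geq_ord_anti : antisymmetric geq_ord.
Proof. by move=> i j le_ij_ji; apply: val_inj; apply/eqP; rewrite eqn_leq andbC. Qed.

Definition counts (w : seq 'I_n) : multi n := [ffun m => count_mem m w].

Definition mono_word (K : multi n) : seq 'I_n :=
  flatten [seq nseq (K m) m | m <- rev (enum 'I_n)].

Lemma big_mono_word (V : nmodType) (F : 'I_n -> V) K :
  \sum_(m <- mono_word K) F m = \sum_(m < n) F m *+ K m.
Proof.
rewrite big_flatten big_map big_rev big_enum /=.
by apply: eq_bigr => m _; rewrite big_nseq iter_addr_0.
Qed.

Lemma counts_mono_word K : counts (mono_word K) = K.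
Proof.
apply/ffunP => i; rewrite ffunE count_flatten sumnE !big_map big_rev big_enum /=.
rewrite (bigD1 i) //= count_nseq /= eqxx mul1n big1 ?addn0 // => m ne_mi.
by rewrite count_nseq /= (negbTE ne_mi).
Qed.

Lemma pairwise_mono_word K : pairwise geq_ord (mono_word K).
Proof.
have : pairwise (fun i j : 'I_n => j < i)%N (rev (enum 'I_n)).
  rewrite -sorted_pairwise => [|i j k lt_ji lt_kj]; last exact: ltn_trans lt_kj lt_ji.
  by rewrite rev_sorted; have := iota_ltn_sorted 0 n; rewrite -val_enum_ord sorted_map.
rewrite /mono_word; elim: (rev _) => //= m l IHl /andP[m_gt pw_l].
rewrite pairwise_cat IHl // andbT; apply/andP; split.
  apply/allrelP => y z /nseqP[-> _] /flatten_mapP[x x_l /nseqP[-> _]].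
  exact: ltnW (allP m_gt x x_l).
by elim: (K m) => //= j ->; rewrite andbT; apply/allP => y /nseqP[-> _]; apply: leqnn.
Qed.

Lemma mono_word_counts w : pairwise geq_ord w -> mono_word (counts w) = w.
Proof.
move=> pw_w; apply: (pairwise_eq geq_ord_anti) => //; first exact: pairwise_mono_word.
apply/allP => x _; apply/eqP.
by have /ffunP/(_ x) := counts_mono_word (counts w); rewrite !ffunE.
Qed.

Lemma counts_perm w m v : perm_eq w (m :: v) -> counts w = addunit (counts v) m.
Proof.
by move=> /permP perm_w; apply/ffunP => i; rewrite !ffunE perm_w /= addnC eq_sym.
Qed.

Lemma addunit_inj (J1 J2 : multi n) m : (addunit J1 m == addunit J2 m) = (J1 == J2).
Proof.
apply/eqP/eqP => [/ffunP eq_J | -> //]; apply/ffunP => i.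
by have := eq_J i; rewrite !ffunE => /addIn.
Qed.

Lemma ordI_addunit (J : multi n) m : ordI (addunit J m) = (ordI J).+1.
Proof.
rewrite /ordI (eq_bigr (fun i => J i + (i == m))%N) => [|i _]; last by rewrite ffunE.
rewrite big_split /=; have -> : (\sum_(i < n) (i == m) = 1)%N.
  by rewrite (bigD1 m) //= eqxx big1 // => i /negbTE ->.
by rewrite addn1.
Qed.

Lemma ordI_counts w : ordI (counts w) = size w.
Proof.
elim: w => [|x w IHw]; first by rewrite /ordI big1 // => m _; rewrite ffunE.
by rewrite (counts_perm (perm_refl (x :: w))) ordI_addunit IHw.
Qed.

Lemma leq_ordI (J : multi n) i : (J i <= ordI J)%N.
Proof. by rewrite /ordI (bigD1 i) //= leq_addr. Qed.

End OrderedWords.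

Arguments geq_ord {n}.

Lemma mono_wordE n (U : nzRingType) (al : 'I_n -> U) K : mono al K = word al (mono_word K).
Proof.
rewrite /mono /word /mono_word big_flatten big_map.
by apply: eq_bigr => m _; rewrite big_nseq iter_mulr_1.
Qed.

Section Coefficients.
Variables (n : nat) (S U : nzRingType) (iota : {rmorphism S -> U}) (al : 'I_n -> U).

Definition combination (t : seq (multi n * S)) : U := \sum_(x <- t) iota x.2 * mono al x.1.

(* [coef] is only specified on combinations with distinct indices; [has_coef u J c]
   says that u has some representation, possibly with repeated indices, whose
   alpha^J-coefficients add up to c. *)
Definition has_coef (u : U) (J : multi n) (c : S) : Prop :=
  exists2 t, u = combination t & \sum_(x <- t | x.1 == J) x.2 = c.

Lemma has_coef0 J : has_coef 0 J 0.
Proof. by exists [::]; rewrite /combination !big_nil. Qed.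

Lemma has_coefD u v J c d : has_coef u J c -> has_coef v J d -> has_coef (u + v) J (c + d).
Proof. by case=> [t1 -> <-] [t2 -> <-]; exists (t1 ++ t2); rewrite /combination !big_cat. Qed.

Lemma has_coef_sum (I : Type) (r : seq I) (P : pred I) (F : I -> U) (C : I -> S) J :
  (forall i, P i -> has_coef (F i) J (C i)) ->
  has_coef (\sum_(i <- r | P i) F i) J (\sum_(i <- r | P i) C i).
Proof.
move=> FC; apply: (big_rec2 (fun u c => has_coef u J c)); first exact: has_coef0.
by move=> i u c /FC; apply: has_coefD.
Qed.

Lemma has_coefMl g u J c : has_coef u J c -> has_coef (iota g * u) J (g * c).
Proof.
case=> t -> <-; exists [seq (x.1, g * x.2) | x <- t]; last by rewrite big_map mulr_sumr.
by rewrite /combination big_map mulr_sumr; apply: eq_bigr => x _; rewrite rmorphM mulrA.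
Qed.

Lemma has_coef_mono K J : has_coef (mono al K) J (K == J)%:R.
Proof.
exists [:: (K, 1)]; first by rewrite /combination big_seq1 rmorph1 mul1r.
by rewrite big_mkcond big_seq1 /=; case: eqP.
Qed.

Variable coef : U -> multi n -> S.
Hypothesis coefE : forall (s : seq (multi n)) (g : multi n -> S) (J : multi n),
  uniq s -> coef (\sum_(I <- s) iota (g I) * mono al I) J = if J \in s then g J else 0.

Lemma coef_combination t J : coef (combination t) J = \sum_(x <- t | x.1 == J) x.2.
Proof.
pose s := undup (unzip1 t); pose g K := \sum_(x <- t | x.1 == K) x.2.
have -> : combination t = \sum_(K <- s) iota (g K) * mono al K.
  under [RHS]eq_bigr do rewrite rmorph_sum mulr_suml big_mkcond /=.
  rewrite exchange_big /combination; apply: eq_big_seq => x x_t /=.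
  have x_s : x.1 \in s by rewrite mem_undup; apply: map_f.
  rewrite (bigD1_seq x.1) ?undup_uniq //= eqxx big1_seq ?addr0 // => K /andP[ne_K _].
  by rewrite eq_sym (negbTE ne_K).
rewrite coefE ?undup_uniq //; case: ifPn => // J_s.
rewrite big1_seq // => x /andP[/eqP eq_J x_t]; case/negP: J_s.
by rewrite -eq_J mem_undup; apply: map_f.
Qed.

Lemma has_coefE u J c : has_coef u J c -> coef u J = c.
Proof. by case=> t -> <-; apply: coef_combination. Qed.

End Coefficients.

Section MonomialCommutator.
Variables (n : nat) (S U : nzRingType) (iota : {rmorphism S -> U}).
Variables (al : 'I_n -> U) (rho : 'I_n -> S -> S).
Hypothesis anchor : forall m s, al m * iota s - iota s * al m = iota (rho m s).

Lemma has_coef_word_span (A : pred (seq 'I_n)) r J :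
  (forall v, A v -> pairwise geq_ord v && (size v != ordI J)) ->
  word_span iota al A r -> has_coef iota al r J 0.
Proof.
move=> A_low; elim=> [|g v u /A_low/andP[pw_v size_v] _ IHu]; first exact: has_coef0.
rewrite -[0]addr0; apply: has_coefD IHu.
have := has_coefMl g (has_coef_mono iota al (counts v) J).
have -> : (counts v == J) = false by apply: contraNF size_v => /eqP <-; rewrite ordI_counts.
by rewrite mulr0 mono_wordE mono_word_counts.
Qed.

Lemma has_coef_commutator_mono I J s : (ordI J).+1 = ordI I ->
  has_coef iota al (mono al I * iota s - iota s * mono al I) J
    (\sum_(m < n) (rho m s * (I == addunit J m)%:R) *+ I m).
Proof.
move=> ordIJ; rewrite mono_wordE; set w := mono_word I.
have pw_w : pairwise geq_ord w := pairwise_mono_word I.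
have counts_w : counts w = I := counts_mono_word I.
have [r r_low ->] := commutator_word anchor w s.
rewrite -[X in has_coef _ _ _ _ X]addr0; apply: has_coefD.
  rewrite -big_mono_word -/w -[in X in has_coef _ _ _ _ X](unzip1_deletions w).
  rewrite big_map !big_seq.
  apply: has_coef_sum => x /in_deletions[sub perm].
  rewrite -(mono_word_counts (subseq_pairwise sub pw_w)) -mono_wordE.
  rewrite -counts_w (counts_perm perm) addunit_inj.
  exact: has_coefMl (has_coef_mono _ _ _ _).
apply: has_coef_word_span r_low => v /andP[sub size_v].
rewrite (subseq_pairwise sub pw_w) ltn_eqF // -ltnS ordIJ -counts_w ordI_counts.
exact: size_v.
Qed.

End MonomialCommutator.

Lemma sum_multi_of_pick n (V : nzRingType) p (K : multi n) (F : multi n -> V) :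
  ordI K = p ->
  \sum_(I : {ffun 'I_n -> 'I_p.+1} | ordI (multi_of I) == p)
     F (multi_of I) * (multi_of I == K)%:R = F K.
Proof.
move=> ordK; pose I0 : {ffun 'I_n -> 'I_p.+1} := [ffun i => inord (K i)].
have I0K : multi_of I0 = K by apply/ffunP => i; rewrite !ffunE inordK // ltnS -ordK leq_ordI.
have multi_of_inj : injective (@multi_of n p.+1).
  move=> I1 I2 /ffunP eq_I; apply/ffunP => i; apply: val_inj.
  by have := eq_I i; rewrite !ffunE.
rewrite (bigD1 I0) /= ?I0K ?ordK ?eqxx ?mulr1 //= big1 ?addr0 // => I /andP[_ ne_I].
by rewrite -I0K (inj_eq multi_of_inj) (negbTE ne_I) mulr0.
Qed.

Theorem lemma2p3 (k : fieldType) (hchar : [pchar k] =i pred0)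
  (n : nat) (hn : (0 < n)%N)
  (U : nzRingType) (iota : {rmorphism {mpoly k[n]} -> U})
  (al : 'I_n -> U)
  (rho : 'I_n -> {mpoly k[n]} -> {mpoly k[n]})
  (c : 'I_n -> 'I_n -> 'I_n -> {mpoly k[n]})
  (coef : U -> multi n -> {mpoly k[n]})
  (hder : forall m, is_kderivation (rho m))
  (hanchor : forall m s, al m * iota s - iota s * al m = iota (rho m s))
  (hbr : forall i j, al i * al j - al j * al i = \sum_(l < n) iota (c i j l) * al l)
  (hbr_anchor : forall i j f,
      rho i (rho j f) - rho j (rho i f) = \sum_(l < n) c i j l * rho l f)
  (hspan : forall u : U, exists (s : seq (multi n)) (g : multi n -> {mpoly k[n]}),
      u = \sum_(I <- s) iota (g I) * mono al I)
  (hcoef : forall (s : seq (multi n)) (g : multi n -> {mpoly k[n]}) (J : multi n),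
      uniq s ->
      coef (\sum_(I <- s) iota (g I) * mono al I) J = if J \in s then g J else 0)
  (p : nat) (hp : (0 < p)%N) (f : multi n -> {mpoly k[n]})
  (q : 'I_n) (J : multi n) (hJ : ordI J = p.-1) :
  let a := \sum_(I : {ffun 'I_n -> 'I_p.+1} | ordI (multi_of I) == p)
             iota (f (multi_of I)) * mono al (multi_of I) in
  coef (a * iota 'X_q - iota 'X_q * a) J
  = \sum_(m < n) (J m).+1%:R * rho m 'X_q * f (addunit J m).
Proof.
move=> a; set x := iota 'X_q.
have commutator_a : a * x - x * a
    = \sum_(I : {ffun 'I_n -> 'I_p.+1} | ordI (multi_of I) == p)
        iota (f (multi_of I)) * (mono al (multi_of I) * x - x * mono al (multi_of I)).
  rewrite mulr_suml mulr_sumr -sumrB; apply: eq_bigr => I _.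
  by rewrite mulrBr !mulrA -!rmorphM mulrC.
have ordIJ (I : {ffun 'I_n -> 'I_p.+1}) :
    ordI (multi_of I) == p -> (ordI J).+1 = ordI (multi_of I).
  by move/eqP->; rewrite hJ prednK.
rewrite commutator_a (has_coefE hcoef (has_coef_sum _ (fun I ordI_p =>
  has_coefMl _ (has_coef_commutator_mono hanchor 'X_q (ordIJ I ordI_p))))).
under eq_bigr do rewrite mulr_sumr.
rewrite exchange_big /=; apply: eq_bigr => m _.
under eq_bigr do rewrite -mulrnAl mulrA.
rewrite (sum_multi_of_pick (fun K => f K * (rho m 'X_q *+ K m))); last first.
  by rewrite ordI_addunit hJ prednK.
by rewrite ffunE eqxx addn1 mulr_natl mulrC.
Qed.
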